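(* Let $G$ be a connected graph and let $e,f$ be edges of $G$ with $e\,\Theta_G\,f$. Then there exist an endpoint $x$ of $e$ and an endpoint $u$ of $f$ such that $e_{\bar{x}}\,\Theta_{S(G)}\,f_{\bar{u}}$. Moreover, if $G$ is bipartite, then there are two disjoint such pairs $\{e_{\bar{x}},f_{\bar{u}}\}$ of edges of $S(G)$ in relation $\Theta_{S(G)}$.
   Context: For a connected graph $H$ with shortest-path distance $d_H$, two edges $\{x,y\}$ and $\{u,v\}$ of $H$ are in relation $\Theta_H$ if $d_H(x,u)+d_H(y,v)\neq d_H(x,v)+d_H(y,u)$. The full subdivision $S(G)$ is obtained by subdividing every edge of $G$ exactly once; the vertex of $S(G)$ corresponding to a vertex $x$ of $G$ is denoted $\bar{x}$, and the vertex subdividing the edge $\{x,y\}$ is denoted $\overline{xy}$. For $e=\{x,y\}\in E(G)$, $e_{\bar{x}}=\{\bar{x},\overline{xy}\}$ and $e_{\bar{y}}=\{\bar{y},\overline{xy}\}$ are the two edges of $S(G)$ corresponding to $e$. *)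

From mathcomp Require Import all_boot.
Set Implicit Arguments. Unset Strict Implicit. Unset Printing Implicit Defensive.

Section Graphs.
Variable T : finType.
Variable g : rel T.

Definition walkn (n : nat) (x y : T) : bool :=
  [exists p : n.-tuple T, path g x p && (last x p == y)].

(* shortest-path distance: least n admitting a walk of length n
   (a shortest walk, if any, has length < #|T|) *)
Definition dist (x y : T) : nat := find (fun n => walkn n x y) (iota 0 #|T|).

Definition connected_graph : Prop := forall x y : T, connect g x y.
Definition simple_graph : Prop := symmetric g /\ irreflexive g.
Definition bipartite : Prop := exists c : T -> bool, forall x y, g x y -> c x != c y.

(* Theta relation on (oriented representatives of) edges {x,y}, {u,v} *)
Definition Theta (xy uv : T * T) : Prop :=
  dist xy.1 uv.1 + dist xy.2 uv.2 <> dist xy.1 uv.2 + dist xy.2 uv.1.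

Definition gedge : pred {set T} :=
  fun A => [exists x, exists y, g x y && (A == [set x; y])].
Definition edgeT := {A : {set T} | gedge A}.

(* full subdivision S(G): vertices inl x = \bar x, inr E = \bar{xy} *)
Definition SV := (T + edgeT)%type.
Definition Srel : rel SV := fun a b =>
  match a, b with
  | inl x, inr E => x \in val E
  | inr E, inl x => x \in val E
  | _, _ => false
  end.
End Graphs.

From mathcomp Require Import all_boot zify.
Set Implicit Arguments. Unset Strict Implicit. Unset Printing Implicit Defensive.

(* In S(G) distances between original vertices double, and a subdivision
   vertex lies one step beyond the closer of its two ends.  Hence
   e_a Θ f_b in S(G) amounts to d(a,b) + d(e,f) <> d(a,f) + d(e,b) in G, where
   d(e,f), d(a,f), d(e,b) are minima over endpoints.  If this failed for all
   four endpoint pairs, adding the four equalities with signs would give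
   d(x,u) + d(y,v) = d(x,v) + d(y,u), contradicting e Θ f.  When G is
   bipartite the two ends of an edge are at distances differing by exactly
   one from any vertex, which leaves two patterns for the four distances
   d(x,u), d(x,v), d(y,u), d(y,v); each one yields two disjoint good pairs.
   The case e = f is trivial, as every edge of S(G) is Θ-related to itself. *)

Lemma setI_set2_eq0 (X : finType) (p q p' q' : X) :
  p != p' -> p != q' -> q != p' -> q != q' -> [set p; q] :&: [set p'; q'] = set0.
Proof.
move=> pp' pq' qp' qq'; apply/setP => z; rewrite !inE.
apply/negbTE/negP => /andP[/orP[]/eqP-> /orP[]/eqP eq_z]; subst;
  by rewrite eqxx in pp' pq' qp' qq'.
Qed.

Section Distance.
Variables (T : finType) (g : rel T).

Lemma walkn0 p w : walkn g 0 p w = (p == w).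
Proof.
apply/existsP/idP => [[t /andP[_ /eqP <-]]|/eqP <-]; first by rewrite (tuple0 t).
by exists [tuple]; rewrite /= eqxx.
Qed.

Lemma walknS k p w : walkn g k.+1 p w = [exists n, g p n && walkn g k n w].
Proof.
apply/existsP/existsP => [[t]|[n /andP[gpn /existsP[t /andP[pt lt]]]]].
  case/tupleP: t => n t /= /andP[/andP[gpn pt] lt].
  by exists n; rewrite gpn; apply/existsP; exists t; rewrite pt.
by exists [tuple of n :: t]; rewrite /= gpn pt.
Qed.

Lemma walknSr k p w : walkn g k.+1 p w = [exists n, walkn g k p n && g n w].
Proof.
elim: k p => [|k IH] p.
  rewrite walknS; apply/existsP/existsP => -[n]; rewrite walkn0.
    by case/andP=> gpn /eqP <-; exists p; rewrite walkn0 eqxx.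
  by case/andP=> /eqP <- gnw; exists w; rewrite walkn0 eqxx gnw.
rewrite walknS; apply/existsP/existsP.
  case=> n1 /andP[gpn1 +]; rewrite IH => /existsP[n /andP[wk gnw]].
  by exists n; rewrite gnw walknS andbT; apply/existsP; exists n1; rewrite gpn1.
case=> n /andP[]; rewrite walknS => /existsP[n1 /andP[gpn1 wk]] gnw.
by exists n1; rewrite gpn1 IH; apply/existsP; exists n; rewrite wk.
Qed.

Lemma walkn_connect k p w : walkn g k p w -> connect g p w.
Proof. by case/existsP=> t /andP[gt /eqP <-]; rewrite (path_connect gt) ?mem_last. Qed.

Lemma connect_walkn p w : connect g p w -> exists2 k, k < #|T| & walkn g k p w.
Proof.
case/connectP=> s gs ->{w}; case: (shortenP gs) => s' gs' /card_uniqP us' _.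
exists (size s'); first by have := max_card (mem (p :: s')); rewrite us'.
by apply/existsP; exists (in_tuple s'); rewrite /= gs' eqxx.
Qed.

Lemma dist_le_walkn k p w : walkn g k p w -> dist g p w <= k.
Proof.
move=> wk; rewrite leqNgt; apply/negP => lt_k.
have lt_kT : k < #|T|.
  by apply: leq_trans lt_k _; rewrite -[X in _ <= X](size_iota 0 #|T|) find_size.
by have := before_find 0 lt_k; rewrite nth_iota ?add0n ?wk.
Qed.

Lemma dist_walkn p w : connect g p w -> walkn g (dist g p w) p w.
Proof.
case/connect_walkn=> k lt_kT wk.
have has_k : has (fun n => walkn g n p w) (iota 0 #|T|).
  by apply/hasP; exists k; rewrite ?mem_iota.
have := nth_find 0 has_k; rewrite nth_iota ?add0n //.
by rewrite -[X in _ < X](size_iota 0 #|T|) -has_find.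
Qed.

Lemma dist_self p : dist g p p = 0.
Proof. by apply/eqP; rewrite -leqn0 dist_le_walkn // walkn0. Qed.

Lemma dist_gt0 p w : connect g p w -> p != w -> 0 < dist g p w.
Proof.
move/dist_walkn=> wk neq_pw; rewrite lt0n; apply: contraNneq neq_pw => d0.
by rewrite d0 walkn0 in wk.
Qed.

Lemma dist_le_adj p n w : g p n -> connect g n w -> dist g p w <= (dist g n w).+1.
Proof.
move=> gpn /dist_walkn wk; apply: dist_le_walkn; rewrite walknS.
by apply/existsP; exists n; rewrite gpn.
Qed.

Lemma dist_next p w : connect g p w -> p != w ->
  exists2 n, g p n & dist g p w = (dist g n w).+1.
Proof.
move=> cpw neq_pw; have := dist_walkn cpw.
case d_pw: (dist g p w) => [|k]; first by rewrite walkn0 (negbTE neq_pw).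
rewrite walknS => /existsP[n /andP[gpn wk]].
exists n => //; apply/eqP; rewrite eqn_leq -d_pw dist_le_adj ?(walkn_connect wk) //.
by rewrite d_pw ltnS dist_le_walkn.
Qed.

Lemma Theta_self p q : connect g p q -> p != q -> Theta g (p, q) (p, q).
Proof. move=> cpq /(dist_gt0 cpq); rewrite /Theta /= !dist_self; lia. Qed.

Lemma walkn_color (c : T -> bool) : (forall x y, g x y -> c x != c y) ->
  forall k a b, walkn g k a b -> c b = c a (+) odd k.
Proof.
move=> c_g; elim=> [|k IH] a b; first by rewrite walkn0 addbF => /eqP ->.
rewrite walknS => /existsP[n /andP[gan /IH ->]].
by move: (c_g _ _ gan) => /=; case: (c a); case: (c n); case: (odd k).
Qed.

Hypothesis g_sym : symmetric g.

Lemma walkn_sym k p w : walkn g k p w = walkn g k w p.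
Proof.
elim: k p w => [|k IH] p w; first by rewrite !walkn0 eq_sym.
by rewrite walknS walknSr; apply: eq_existsb => n; rewrite IH g_sym andbC.
Qed.

Lemma dist_sym p w : dist g p w = dist g w p.
Proof. by apply: eq_find => k; exact: walkn_sym. Qed.

Lemma dist_bipartite_adj a u v : bipartite g -> g u v -> connect g a u ->
  dist g a v = (dist g a u).+1 \/ dist g a u = (dist g a v).+1.
Proof.
move=> [c c_g] guv cau.
have cav : connect g a v by rewrite (connect_trans cau) ?connect1.
have neq_uv := c_g _ _ guv.
have neq_d : dist g a u != dist g a v.
  apply: contraNneq neq_uv => d_eq.
  apply/eqP; rewrite (walkn_color c_g (dist_walkn cau)).
  by rewrite (walkn_color c_g (dist_walkn cav)) d_eq.
have cua : connect g u a by rewrite sym_connect_sym.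
have cva : connect g v a by rewrite sym_connect_sym.
have gvu : g v u by rewrite g_sym.
have := dist_le_adj guv cva; have := dist_le_adj gvu cua.
rewrite -!(dist_sym a); lia.
Qed.

End Distance.

Section Subdivision.
Variables (T : finType) (g : rel T).
Hypothesis g_sym : symmetric g.

Local Notation S := (Srel (g:=g)).
Local Notation D := (dist g).
Local Notation DS := (dist S).

Lemma Srel_sym : symmetric S.
Proof. by move=> [a|E] [b|F]. Qed.

Lemma gedge_set2 a n : g a n -> gedge g [set a; n].
Proof.
by move=> gan; apply/existsP; exists a; apply/existsP; exists n; rewrite gan eqxx.
Qed.

Definition edge_of a n (gan : g a n) : edgeT g := exist _ [set a; n] (gedge_set2 gan).

Lemma edgeT_mem (E : edgeT g) : exists x, x \in val E.
Proof.
by case: E => A /= /existsP[x /existsP[y /andP[_ /eqP ->]]]; exists x; rewrite set21.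
Qed.

Lemma edgeT_adj (E : edgeT g) a c : a \in val E -> c \in val E -> a != c -> g a c.
Proof.
case: E => A /= /existsP[x /existsP[y /andP[gxy /eqP ->]]].
by rewrite !in_set2 => /orP[]/eqP-> /orP[]/eqP->; rewrite ?eqxx // g_sym.
Qed.

Lemma walkn_subdiv k a b : walkn g k a b -> walkn S k.*2 (inl a) (inl b).
Proof.
elim: k a => [|k IH] a; first by rewrite !walkn0 => /eqP ->.
rewrite walknS => /existsP[n /andP[gan wk]].
rewrite doubleS walknS; apply/existsP; exists (inr (edge_of gan)).
rewrite /= set21 walknS; apply/existsP; exists (inl n); by rewrite /= set22 IH.
Qed.

Lemma subdiv_connected : connected_graph g -> connected_graph S.
Proof.
move=> g_conn.
have conn_inl a b : connect S (inl a) (inl b).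
  by have [k _ /walkn_subdiv/walkn_connect] := connect_walkn (g_conn a b).
have to_inl q : exists a, connect S q (inl a).
  case: q => [a|E]; first by exists a.
  by have [a aE] := edgeT_mem E; exists a; rewrite connect1.
move=> p q; have [a pa] := to_inl p; have [b qb] := to_inl q.
rewrite (connect_trans pa) // (connect_trans (conn_inl a b)) //.
by rewrite sym_connect_sym //; exact: Srel_sym.
Qed.

Hypothesis g_conn : connected_graph g.

Let S_conn : connected_graph S := subdiv_connected g_conn.

Lemma dist_subdiv_inl a b : DS (inl a) (inl b) = (D a b).*2.
Proof.
apply/eqP; rewrite eqn_leq dist_le_walkn ?walkn_subdiv ?dist_walkn //=.
move e_n: (DS (inl a) (inl b)) => n; elim/ltn_ind: n a e_n => n IH a d_ab.
have [->|neq_ab] := eqVneq a b; first by rewrite dist_self.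
have [[//|E] aE d_aE] := dist_next (S_conn (inl a) (inl b)) neq_ab.
have [[c|//] cE d_Ec] := dist_next (S_conn (inr E) (inl b)) isT.
have le_cb : (D c b).*2 <= DS (inl c) (inl b) by apply: IH erefl; rewrite -d_ab d_aE d_Ec.
suff : D a b <= (D c b).+1 by lia.
have [<-|neq_ac] := eqVneq a c; first exact: leqW.
exact: dist_le_adj (edgeT_adj aE cE neq_ac) (g_conn _ _).
Qed.

Lemma dist_subdiv_edge (F : edgeT g) u v (q : SV g) : val F = [set u; v] -> q != inr F ->
  DS (inr F) q = (minn (DS (inl u) q) (DS (inl v) q)).+1.
Proof.
move=> hF; rewrite eq_sym => neq_Fq.
have Fu : S (inr F) (inl u) by rewrite /= hF set21.
have Fv : S (inr F) (inl v) by rewrite /= hF set22.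
have le_u : DS (inr F) q <= (DS (inl u) q).+1 := dist_le_adj Fu (S_conn _ q).
have le_v : DS (inr F) q <= (DS (inl v) q).+1 := dist_le_adj Fv (S_conn _ q).
have [[c|//] cF d_Fq] := dist_next (S_conn (inr F) q) neq_Fq.
have {}d_Fq : DS (inr F) q = (DS (inl c) q).+1 := d_Fq.
(* [set] identifies the statement's and the [have]s' elaborations of these
   distances, which lia would otherwise treat as distinct atoms. *)
move: cF; rewrite /= hF in_set2 => /orP[]/eqP c_end; rewrite c_end in d_Fq;
  set du := DS (inl u) q in le_u d_Fq *; set dv := DS (inl v) q in le_v d_Fq *; lia.
Qed.

Lemma Theta_subdiv_diag (E : edgeT g) a : Theta S (inl a, inr E) (inl a, inr E).
Proof. by apply: Theta_self; [exact: S_conn|]. Qed.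

Section TwoEdges.
Variables (x y u v : T) (E F : edgeT g).
Hypotheses (hE : val E = [set x; y]) (hF : val F = [set u; v]) (neq_EF : E != F).

Local Notation dEF := (minn (minn (D x u) (D x v)) (minn (D y u) (D y v))).

Lemma Theta_subdivE a b : Theta S (inl a, inr E) (inl b, inr F) <->
  D a b + dEF <> minn (D a u) (D a v) + minn (D x b) (D y b).
Proof.
have d_inl_F z : DS (inl z) (inr F) = (minn (D z u) (D z v)).*2.+1.
  rewrite (dist_sym Srel_sym) (dist_subdiv_edge hF) // !dist_subdiv_inl.
  by rewrite !(dist_sym g_sym _ z); lia.
have d_E_F : DS (inr E) (inr F) = dEF.*2.+2.
  by rewrite (dist_subdiv_edge hE) ?d_inl_F /= 1?eq_sym //; lia.
have d_E_inl z : DS (inr E) (inl z) = (minn (D x z) (D y z)).*2.+1.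
  by rewrite (dist_subdiv_edge hE) // !dist_subdiv_inl; lia.
rewrite /Theta /= dist_subdiv_inl d_E_F d_inl_F d_E_inl.
by split=> neq_sums eq_sums; apply: neq_sums; lia.
Qed.

Hypothesis theta_ef : Theta g (x, y) (u, v).

Lemma Theta_subdiv_endpoints : exists a b,
  [/\ a \in val E, b \in val F & Theta S (inl a, inr E) (inl b, inr F)].
Proof.
have [xE yE uF vF] : [/\ x \in val E, y \in val E, u \in val F & v \in val F].
  by rewrite hE hF !inE !eqxx ?orbT.
pose R a b := D a b + dEF == minn (D a u) (D a v) + minn (D x b) (D y b).
have : ~~ [&& R x u, R x v, R y u & R y v].
  apply/negP => /and4P[/eqP + /eqP + /eqP + /eqP +]; move: theta_ef; rewrite /Theta /=.
  (* Generalizing the minima spares lia a case split on every [minn]. *)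
  move: dEF (minn (D x u) (D x v)) (minn (D y u) (D y v)) => m rx ry.
  move: (minn (D x u) (D y u)) (minn (D x v) (D y v)) => cu cv; lia.
rewrite !negb_and => /or4P[] /eqP/Theta_subdivE th;
  [exists x, u | exists x, v | exists y, u | exists y, v]; exact: And3.
Qed.

Lemma dist_bipartite_pattern : bipartite g -> g x y -> g u v ->
  [/\ D x v = (D x u).+1, D y u = (D x u).+1 & D y v = D x u] \/
  [/\ D x u = (D x v).+1, D y v = (D x v).+1 & D y u = D x v].
Proof.
move=> bip gxy guv.
have theta : D x u + D y v <> D x v + D y u := theta_ef.
have d_x : D x v = (D x u).+1 \/ D x u = (D x v).+1 :=
  dist_bipartite_adj g_sym bip guv (g_conn x u).
have d_y : D y v = (D y u).+1 \/ D y u = (D y v).+1 :=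
  dist_bipartite_adj g_sym bip guv (g_conn y u).
have d_u : D y u = (D x u).+1 \/ D x u = (D y u).+1.
  by rewrite !(dist_sym g_sym _ u); exact (dist_bipartite_adj g_sym bip gxy (g_conn u x)).
have d_v : D y v = (D x v).+1 \/ D x v = (D y v).+1.
  by rewrite !(dist_sym g_sym _ v); exact (dist_bipartite_adj g_sym bip gxy (g_conn v x)).
by case: (ltnP (D x u) (D x v)) => cmp; [left|right]; split; lia.
Qed.

Lemma Theta_subdiv_two_pairs : g x y -> g u v -> bipartite g ->
  exists a b a' b' : T,
    [/\ a \in val E, b \in val F, a' \in val E & b' \in val F] /\
    [/\ Theta S (inl a, inr E) (inl b, inr F),
        Theta S (inl a', inr E) (inl b', inr F) &
        [set (a, E); (b, F)] :&: [set (a', E); (b', F)] = set0].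
Proof.
move=> gxy guv bip.
have [xE yE uF vF] : [/\ x \in val E, y \in val E, u \in val F & v \in val F].
  by rewrite hE hF !inE !eqxx ?orbT.
have disj (a b a' b' : T) : g a a' -> g b b' ->
    [set (a, E); (b, F)] :&: [set (a', E); (b', F)] = set0.
  have [c c_g] := bip; have neq_FE : F != E by rewrite eq_sym.
  move=> /c_g c_a /c_g c_b.
  have neq_a : a != a' by apply: contraNneq c_a => ->.
  have neq_b : b != b' by apply: contraNneq c_b => ->.
  apply: setI_set2_eq0; rewrite xpair_eqE ?eqxx ?andbT //.
    by rewrite (negbTE neq_EF) andbF.
  by rewrite (negbTE neq_FE) andbF.
have gvu : g v u by rewrite g_sym.
case: (dist_bipartite_pattern bip gxy guv) => [[d_xv d_yu d_yv]|[d_xu d_yv d_yu]].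
- exists x, v, y, u; split; first exact: And4.
  by split; try (apply/Theta_subdivE; rewrite d_xv d_yu d_yv; lia); apply: disj.
- exists x, u, y, v; split; first exact: And4.
  by split; try (apply/Theta_subdivE; rewrite d_xu d_yu d_yv; lia); apply: disj.
Qed.

End TwoEdges.

End Subdivision.

Theorem lemma3p3 (T : finType) (g : rel T) :
  simple_graph g -> connected_graph g ->
  forall (x y u v : T) (E F : edgeT g),
    g x y -> g u v -> val E = [set x; y] -> val F = [set u; v] ->
    Theta g (x, y) (u, v) ->
    (exists a b : T, [/\ a \in val E, b \in val F &
        Theta (Srel (g:=g)) (inl a, inr E) (inl b, inr F)])
    /\
    (bipartite g ->
      exists a b a' b' : T,
        [/\ a \in val E, b \in val F, a' \in val E & b' \in val F] /\
        [/\ Theta (Srel (g:=g)) (inl a, inr E) (inl b, inr F),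
            Theta (Srel (g:=g)) (inl a', inr E) (inl b', inr F) &
            [set (a, E); (b, F)] :&: [set (a', E); (b', F)] = set0]).
Proof.
move=> [g_sym g_irr] g_conn x y u v E F gxy guv hE hF theta.
have [<-|neq_EF] := eqVneq E F; last first.
  split; first exact (Theta_subdiv_endpoints g_sym g_conn hE hF neq_EF theta).
  exact (Theta_subdiv_two_pairs g_sym g_conn hE hF neq_EF theta gxy guv).
have neq_xy : x != y by apply: contraTneq gxy => ->; rewrite g_irr.
have [xE yE] : x \in val E /\ y \in val E by rewrite hE !inE !eqxx ?orbT.
have diag := Theta_subdiv_diag g_conn (E:=E).
split=> [|_]; first by exists x, x.
exists x, x, y, y; split; first exact: And4.
split; [exact: diag | exact: diag |].
by apply: setI_set2_eq0; rewrite xpair_eqE eqxx andbT.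
Qed.
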